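(* In the two-valued atomic model under the Shapley scheme, consider a winning pool $S$ consisting of one large player (player $1$, stake $a$) and $k$ small players (stake $1$). If $k<h$, then $\phi_1(S)=\frac{k-h+a+1}{k+1}$ and each small player in $S$ receives $\frac{h-a}{k(k+1)}$. If $k\ge h$, then $\phi_1(S)=\frac{a}{k+1}$ and each small player in $S$ receives $\frac{k+1-a}{k(k+1)}$.
   Context: Atomic model with threshold $h$; every player has stake either $1$ (small) or $a$ (large), where $h,a$ are integers with $2\le a\le h-1$. A pool $S$ has reward $\rho(S)=1$ if its total stake is at least $h$ (winning) and $0$ otherwise. Shapley scheme: player $i$ in pool $S$ receives $\phi_i(S)=\sum_{T\subseteq S\setminus\{i\}}\frac{|T|!(|S|-|T|-1)!}{|S|!}(\rho(T\cup\{i\})-\rho(T))$. *)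

From HB Require Import structures.
From mathcomp Require Import all_boot all_order all_algebra.
Set Implicit Arguments. Unset Strict Implicit. Unset Printing Implicit Defensive.
Import Order.TTheory GRing.Theory Num.Theory.
Local Open Scope ring_scope.

Definition stake (P : finType) (w : P -> nat) (S : {set P}) : nat :=
  (\sum_(i in S) w i)%N.

Definition rho (P : finType) (w : P -> nat) (h : nat) (S : {set P}) : rat :=
  if (h <= stake w S)%N then 1 else 0.

Definition shapley (P : finType) (w : P -> nat) (h : nat) (S : {set P}) (i : P) : rat :=
  \sum_(T in powerset (S :\ i))
     (((#|T| `! * (#|S| - #|T| - 1) `!)%N)%:R / (#|S| `!)%:R)
       * (rho w h (i |: T) - rho w h T).

From mathcomp Require Import all_boot all_order all_algebra perm.
From mathcomp Require Import zify ring.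
Import Order.TTheory GRing.Theory Num.Theory.
Local Open Scope ring_scope.
Set Implicit Arguments. Unset Strict Implicit. Unset Printing Implicit Defensive.

(* For a coalition of t small players the large player's marginal contribution
   is 1 exactly when h - a <= t < h, and for each t the Shapley weights of all
   t-subsets of the k small players add up to 1/(k+1); so phi_1 is the number
   of such t in [0, k], divided by k+1.  The small players are interchangeable
   (a transposition of two of them preserves every stake), and by efficiency
   they share 1 - phi_1 equally. *)

Definition shapley_weight (R : numFieldType) (n t : nat) : R :=
  (t`! * (n - t - 1)`!)%:R / (n`!)%:R.

Definition shapley_value (R : numFieldType) (P : finType) (v : {set P} -> R)
    (S : {set P}) (i : P) : R :=
  \sum_(T in powerset (S :\ i)) shapley_weight R #|S| #|T| * (v (i |: T) - v T).

Lemma shapleyE (P : finType) (w : P -> nat) h : shapley w h = shapley_value (rho w h).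
Proof. by []. Qed.

Lemma natr_fact_neq0 (R : numFieldType) n : (n`!)%:R != 0 :> R.
Proof. by rewrite pnatr_eq0 -lt0n fact_gt0. Qed.

Lemma bin_shapley_weight (R : numFieldType) n t : (t <= n)%N ->
  'C(n, t)%:R * shapley_weight R n.+1 t = n.+1%:R^-1.
Proof.
move=> le_tn; rewrite /shapley_weight.
have -> : (n.+1 - t - 1 = n - t)%N by lia.
rewrite mulrA -natrM bin_fact // factS natrM invfM.
by rewrite mulrCA mulfV ?natr_fact_neq0 ?mulr1.
Qed.

(* The coefficient of [v U] in [\sum_(i in S) shapley_value v S i] when
   [#|U| = u] and [#|S| = n]; for u = 0 and u = n the junk weights at
   [u.-1] and [n - u - 1] are multiplied by 0. *)
Lemma shapley_weight_balance (R : numFieldType) n u : (u <= n)%N ->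
  u%:R * shapley_weight R n u.-1 - (n - u)%:R * shapley_weight R n u
    = (u == n)%:R - (u == 0%N)%:R.
Proof.
rewrite /shapley_weight; case: u => [|u] le_un /=.
  rewrite mul0r sub0r subn0; case: n le_un => [|n] _; first by rewrite mul0r oppr0 subrr.
  by rewrite subn1 /= mulrA -natrM fact0 mul1n -factS mulfV ?natr_fact_neq0 ?sub0r.
rewrite -(subnK le_un) addnK -subnDA addn1 addnK !mulrA -!natrM mulnA -factS.
case: (n - u.+1)%N => [|m].
  by rewrite add0n eqxx mul0n mul0r subr0 fact0 muln1 mulfV ?natr_fact_neq0 ?subr0.
rewrite subn1 /= mulnCA -factS mulnC subrr subr0.
by rewrite -{1}[u.+1]add0n eqn_add2r.
Qed.

Section PowersetSums.

Variables (R : numFieldType) (T : finType).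

Lemma sum_powerset_card (U : {set T}) (F : nat -> R) :
  \sum_(X in powerset U) F #|X| = \sum_(t < #|U|.+1) 'C(#|U|, t)%:R * F t.
Proof.
transitivity (\sum_(X in powerset U) \sum_(t < #|U|.+1) (#|X| == t)%:R * F t).
  apply: eq_bigr => X; rewrite powersetE => XU.
  have ltXU : (#|X| < #|U|.+1)%N by rewrite ltnS subset_leq_card.
  rewrite (bigD1 (Ordinal ltXU)) //= eqxx mul1r big1 ?addr0 // => t /= neq_t.
  suff /negbTE -> : #|X| != t by rewrite mul0r.
  by apply: contraNneq neq_t => eXt; rewrite -val_eqE /= eXt.
rewrite exchange_big; apply: eq_bigr => t _.
rewrite -big_distrl /= -natr_sum; congr (_%:R * _); move: (nat_of_ord t) => m.
rewrite -cards_draws -sum1_card big_mkcond [RHS]big_mkcond /=.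
by apply: eq_bigr => X _; rewrite !inE; case: (X \subset U).
Qed.

Lemma sum_powerset_setD1 (U : {set T}) x (F : {set T} -> R) : x \in U ->
  \sum_(X in powerset U) F X = \sum_(X in powerset (U :\ x)) (F X + F (x |: X)).
Proof.
move=> Ux; rewrite big_split /= (bigID (fun X : {set T} => x \in X)) /= addrC.
congr (_ + _).
  by apply: eq_bigl => X; rewrite !powersetE subsetD1.
rewrite (reindex_onto (fun X => x |: X) (fun X => X :\ x)) /=; last first.
  by move=> X /andP [_ Xx]; rewrite setD1K.
have DxUx X : ((x |: X) :\ x == X) = (x \notin X).
  by apply/eqP/idP => [<- | /setU1K //]; rewrite setD11.
apply: eq_bigl => X; rewrite !powersetE setU11 andbT subUset sub1set Ux DxUx.
by rewrite subsetD1.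
Qed.

Lemma imset_can (f g : T -> T) :
  cancel f g -> cancel (fun U : {set T} => f @: U) (fun U => g @: U).
Proof. by move=> fK U; rewrite -imset_comp (eq_imset _ fK) imset_id. Qed.

End PowersetSums.

Section ShapleyValue.

Variables (R : numFieldType) (P : finType) (v : {set P} -> R).

Lemma shapley_value_card (S : {set P}) i (f : nat -> R) : i \in S ->
  (forall T : {set P}, T \subset S :\ i -> v (i |: T) - v T = f #|T|) ->
  shapley_value v S i = #|S|%:R^-1 * \sum_(t < #|S|) f t.
Proof.
move=> Si marg; have cardS : #|S| = #|S :\ i|.+1 by rewrite (cardsD1 i S) Si.
rewrite /shapley_value.
rewrite (eq_bigr (fun T : {set P} => shapley_weight R #|S| #|T| * f #|T|)) => [|T].
  rewrite (sum_powerset_card _ (fun t => shapley_weight R #|S| t * f t)) cardS mulr_sumr.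
  by apply: eq_bigr => t _; rewrite mulrA bin_shapley_weight // -ltnS.
by rewrite powersetE => /marg ->.
Qed.

Lemma shapley_value_powerset (S : {set P}) i : i \in S ->
  shapley_value v S i = \sum_(U in powerset S)
    ((i \in U)%:R * shapley_weight R #|S| #|U|.-1
       - (i \notin U)%:R * shapley_weight R #|S| #|U|) * v U.
Proof.
move=> Si; rewrite (sum_powerset_setD1 _ Si); apply: eq_bigr => T.
rewrite powersetE subsetD1 => /andP [_ iT].
by rewrite cardsU1 iT setU11 (negbTE iT) /=; ring.
Qed.

Lemma sum_mem_card (S U : {set P}) :
  U \subset S -> \sum_(i in S) (i \in U)%:R = #|U|%:R :> R.
Proof.
move=> US; rewrite -natr_sum (big_setID U) /= (setIidPr US).
rewrite [X in (_ + X)%N]big1 => [|i]; last by rewrite inE => /andP [/negbTE ->].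
by rewrite addn0 -sum1_card; congr _%:R; apply: eq_bigr => i ->.
Qed.

Lemma shapley_value_sum (S : {set P}) :
  \sum_(i in S) shapley_value v S i = v S - v set0.
Proof.
rewrite (eq_bigr _ (fun i Si => shapley_value_powerset Si)) exchange_big /=.
rewrite (eq_bigr (fun U => ((U == S)%:R - (U == set0)%:R) * v U)); last first.
  move=> U; rewrite powersetE => US; rewrite -big_distrl /= sumrB -!mulr_suml.
  have card_notin : \sum_(i in S) (i \notin U)%:R = (#|S| - #|U|)%:R :> R.
    rewrite -[in RHS](setIidPr US) -cardsD -(sum_mem_card (subsetDl S U)).
    by apply: eq_bigr => i Si; rewrite inE Si andbT.
  rewrite sum_mem_card // card_notin shapley_weight_balance ?subset_leq_card //.
  by rewrite cards_eq0 [U == S]eqEcard US eqn_leq subset_leq_card.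
have pick (A : {set P}) :
    A \subset S -> \sum_(U in powerset S) (U == A)%:R * v U = v A.
  move=> AS; rewrite (bigD1 A) ?powersetE //= eqxx mul1r big1 ?addr0 //.
  by move=> U /andP [_ /negbTE ->]; rewrite mul0r.
rewrite (eq_bigr (fun U => (U == S)%:R * v U - (U == set0)%:R * v U)) => [|U _].
  by rewrite sumrB !pick ?sub0set.
by rewrite mulrBl.
Qed.

Lemma shapley_value_perm (s : {perm P}) (S : {set P}) i :
  (forall T : {set P}, v (s @: T) = v T) ->
  shapley_value v (s @: S) (s i) = shapley_value v S i.
Proof.
move=> vs; have s_inj : injective s := @perm_inj _ s.
rewrite /shapley_value (card_imset _ s_inj).
have -> : s @: S :\ s i = s @: (S :\ i).
  apply/setP => x; rewrite -[x](permKV s).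
  by rewrite in_setD1 !(mem_imset _ _ s_inj) in_setD1 (inj_eq s_inj).
rewrite (reindex (fun U : {set P} => s @: U)) /=; last first.
  exists (fun U : {set P} => (s^-1)%g @: U) => U _.
    exact: imset_can (permK s) U.
  exact: imset_can (permKV s) U.
apply: eq_big => [U | U _].
  rewrite !powersetE; apply/idP/idP => [/(imsetS (s^-1)%g) | /(imsetS s)] //.
  by rewrite !(imset_can (permK s)).
by rewrite -(imsetU1 s) !vs (card_imset _ s_inj).
Qed.

End ShapleyValue.

Section Stake.

Variables (P : finType) (w : P -> nat).

Lemma stakeU1 (x : P) (X : {set P}) :
  x \notin X -> stake w (x |: X) = (w x + stake w X)%N.
Proof. by move=> xX; rewrite /stake big_setU1. Qed.

Lemma stake_unit (X : {set P}) : {in X, forall i, w i = 1%N} -> stake w X = #|X|.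
Proof. by move=> w1; rewrite /stake -sum1_card; apply: eq_bigr. Qed.

Lemma stake_perm (s : {perm P}) (X : {set P}) :
  (forall x, w (s x) = w x) -> stake w (s @: X) = stake w X.
Proof.
by move=> ws; rewrite /stake big_imset /=; [apply: eq_bigr | move=> x y _ _ /perm_inj].
Qed.

Lemma rhoE h (X : {set P}) : rho w h X = (h <= stake w X)%:R.
Proof. by rewrite /rho; case: leqP. Qed.

Lemma rho0 h : (0 < h)%N -> rho w h set0 = 0.
Proof. by rewrite /rho /stake big_set0 leqn0 => /lt0n_neq0 /negbTE ->. Qed.

End Stake.

Lemma sum_ord_leq (R : numFieldType) (n m : nat) :
  \sum_(t < n) (m <= t)%:R = (n - m)%:R :> R.
Proof.
elim: n => [|n IH]; first by rewrite big_ord0 sub0n.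
rewrite big_ord_recr /= IH; case: (leqP m n) => [le_mn | lt_nm].
  by rewrite -natrD addn1 subSn.
by rewrite addr0; congr _%:R; lia.
Qed.

Section OneLargePlayer.

Variables (P : finType) (w : P -> nat) (h a : nat) (S : {set P}) (p1 : P) (k : nat).
Hypotheses (p1S : p1 \in S) (w_p1 : w p1 = a)
  (w_small : forall j, j \in S -> j != p1 -> w j = 1%N) (card_S : #|S| = k.+1).

Lemma card_small : #|S :\ p1| = k.
Proof. by move: card_S; rewrite (cardsD1 p1) p1S => -[]. Qed.

Lemma card_small_gt0 j : j \in S -> j != p1 -> (0 < k)%N.
Proof.
by move=> jS jp; rewrite -card_small; apply/card_gt0P; exists j; rewrite in_setD1 jp.
Qed.

Lemma stake_small (T : {set P}) : T \subset S :\ p1 -> stake w T = #|T|.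
Proof.
move=> /subsetP TS; apply: stake_unit => i /TS.
by rewrite in_setD1 => /andP [ip iS]; apply: w_small.
Qed.

Lemma stake_pool : stake w S = (a + k)%N.
Proof.
by rewrite -(setD1K p1S) stakeU1 ?setD11 // w_p1 stake_small // card_small.
Qed.

Lemma shapley_large :
  shapley w h S p1 = ((k.+1 - (h - a))%:R - (k.+1 - h)%:R) / k.+1%:R.
Proof.
pose marginal t : rat := (h - a <= t)%:R - (h <= t)%:R.
rewrite shapleyE (@shapley_value_card _ _ _ _ _ marginal) //.
  by rewrite sumrB !sum_ord_leq card_S mulrC.
move=> T TS; have p1T : p1 \notin T by apply/negP => /(subsetP TS); rewrite setD11.
by rewrite /marginal !rhoE stakeU1 // stake_small // w_p1 leq_subLR.
Qed.

Lemma shapley_small_eq j j' : j \in S -> j != p1 -> j' \in S -> j' != p1 ->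
  shapley w h S j' = shapley w h S j.
Proof.
move=> jS jp j'S j'p; pose s := tperm j j'.
have sS : s @: S = S.
  by apply/im_perm_on/(subset_trans (tperm_on j j')); rewrite subUset !sub1set jS j'S.
have ws x : w (s x) = w x by rewrite /s; case: tpermP => [->|->|] //; rewrite !w_small.
rewrite !shapleyE -{1}sS -(tpermL j j') shapley_value_perm // => T.
by rewrite !rhoE stake_perm.
Qed.

Lemma shapley_small j : j \in S -> j != p1 -> (0 < h)%N -> rho w h S = 1 ->
  shapley w h S j = (1 - shapley w h S p1) / k%:R.
Proof.
move=> jS jp h_gt0 win.
have k_neq0 : k%:R != 0 :> rat by rewrite pnatr_eq0 -lt0n (card_small_gt0 jS jp).
have := shapley_value_sum (rho w h) S.
rewrite -shapleyE (bigD1 p1) //= win rho0 // subr0.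
rewrite (eq_bigl (fun i => i \in S :\ p1)) => [|i]; last by rewrite in_setD1 andbC.
rewrite (eq_bigr (fun _ => shapley w h S j)) => [|i]; last first.
  by rewrite in_setD1 => /andP [ip iS]; apply: shapley_small_eq.
rewrite sumr_const card_small => eff.
have -> : 1 - shapley w h S p1 = shapley w h S j *+ k by rewrite -eff addrAC subrr add0r.
by rewrite -(mulr_natr (shapley w h S j)) mulfK.
Qed.

End OneLargePlayer.

Theorem lemma3p7 (P : finType) (w : P -> nat) (h a : nat)
  (ha2 : (2 <= a)%N) (hah : (a <= h - 1)%N)
  (hw : forall i : P, w i = 1%N \/ w i = a)
  (S : {set P}) (p1 : P) (k : nat)
  (hp1S : p1 \in S) (hp1 : w p1 = a)
  (hsmall : forall j, j \in S -> j != p1 -> w j = 1%N)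
  (hcard : #|S| = k.+1)
  (hwin : rho w h S = 1) :
  ((k < h)%N ->
     shapley w h S p1 = (k%:R - h%:R + a%:R + 1) / (k%:R + 1) /\
     (forall j, j \in S -> j != p1 ->
        shapley w h S j = (h%:R - a%:R) / (k%:R * (k%:R + 1))))
  /\
  ((h <= k)%N ->
     shapley w h S p1 = a%:R / (k%:R + 1) /\
     (forall j, j \in S -> j != p1 ->
        shapley w h S j = (k%:R + 1 - a%:R) / (k%:R * (k%:R + 1)))).
Proof.
have h_gt0 : (0 < h)%N by lia.
have win : (h <= a + k)%N.
  by move: hwin; rewrite rhoE (stake_pool hp1S hp1 hsmall hcard); case: leqP.
have large := shapley_large h hp1S hp1 hsmall hcard.
have small j (jS : j \in S) (jp : j != p1) :=
  shapley_small hp1S hsmall hcard jS jp h_gt0 hwin.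
have k1_neq0 : k%:R + 1 != 0 :> rat by rewrite natr1 pnatr_eq0.
have k_neq0 j : j \in S -> j != p1 -> k%:R != 0 :> rat.
  by move=> jS jp; rewrite pnatr_eq0 -lt0n (card_small_gt0 hp1S hcard jS jp).
split=> hk.
  have large_val : shapley w h S p1 = (k%:R - h%:R + a%:R + 1) / (k%:R + 1).
    rewrite large -natr1 (_ : k.+1 - h = 0)%N ?subr0; last by lia.
    by rewrite !natrB -?natr1; [congr (_ / _); ring | lia | lia].
  split=> // j jS jp; rewrite small // large_val.
  by field; rewrite (k_neq0 _ jS jp) k1_neq0.
have large_val : shapley w h S p1 = a%:R / (k%:R + 1).
  by rewrite large -natr1 !natrB -?natr1; [congr (_ / _); ring | lia | lia | lia].
split=> // j jS jp; rewrite small // large_val.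
by field; rewrite (k_neq0 _ jS jp) k1_neq0.
Qed.
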